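(* Let $\ell\ge2$ and $n\ge1$ be integers such that either $\gcd(\ell,n)=1$ or $\ell$ is prime. Then the number of switching equivalence classes in $\mathrm{Alt}_n(\mathbb{Z}/\ell\mathbb{Z})$ equals the number of isomorphism classes of modular Eulerian matrices in $\mathrm{Alt}_n(\mathbb{Z}/\ell\mathbb{Z})$.
   Context: $\mathrm{Alt}_n(\mathbb{Z}/\ell\mathbb{Z})$ is the set of $n\times n$ matrices $M=(m_{ij})$ over $\mathbb{Z}/\ell\mathbb{Z}$ with $m_{ii}=0$ and $m_{ij}+m_{ji}=0$. For $v\in[n]$ let $X_v$ be the matrix with $(X_v)_{iv}=1$ and $(X_v)_{vi}=-1$ for all $i\ne v$ and all other entries $0$; the switching at $v$ is $\mu_v(M)=M+X_v$. $M\cong M'$ means there is $\sigma\in\mathfrak{S}_n$ with $m'_{\sigma(i)\sigma(j)}=m_{ij}$ for all $i,j$. $M,M'$ are switching equivalent if there are positive integers $i_1,\dots,i_n$ with $M'\cong\mu_1^{i_1}\cdots\mu_n^{i_n}(M)$. $M$ is a modular Eulerian matrix if $\sum_{j=1}^n m_{ij}=0$ in $\mathbb{Z}/\ell\mathbb{Z}$ for every $i$. *)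

From HB Require Import structures.
From mathcomp Require Import all_boot all_order all_algebra all_fingroup.
From mathcomp Require Import boolp.
Set Implicit Arguments. Unset Strict Implicit. Unset Printing Implicit Defensive.
Import GRing.Theory.
Local Open Scope ring_scope.

Section Defs.
Variables (l n : nat).
Local Notation M := 'M['Z_l]_n.

(* Alt_n(Z/lZ): zero diagonal, antisymmetric. ('Z_l is Z/lZ for l >= 2.) *)
Definition Alt : {set M} :=
  [set A : M | [forall i, A i i == 0] && [forall i, forall j, A i j + A j i == 0]].

Definition Xsw (v : 'I_n) : M :=
  \matrix_(i, j) (if (j == v) && (i != v) then 1
                  else if (i == v) && (j != v) then -1 else 0).

Definition mu (v : 'I_n) (A : M) : M := A + Xsw v.

Definition switch_all (e : 'I_n -> nat) (A : M) : M :=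
  foldr (fun v B => iter (e v) (mu v) B) A (enum 'I_n).

Definition iso (A B : M) : Prop :=
  exists s : 'S_n, forall i j, B (s i) (s j) = A i j.

Definition switch_equiv (A A' : M) : Prop :=
  exists e : 'I_n -> nat, (forall v, (0 < e v)%N) /\ iso A' (switch_all e A).

Definition eulerian (A : M) : bool := [forall i, \sum_j A i j == 0].

Definition num_switch_classes : nat :=
  #|[set [set B in Alt | `[< switch_equiv A B >]] | A in Alt]|.

Definition EulAlt : {set M} := [set A in Alt | eulerian A].
Definition num_iso_eulerian_classes : nat :=
  #|[set [set B in EulAlt | `[< iso A B >]] | A in EulAlt]|.
End Defs.

From Pilot Require Import Defs.
From HB Require Import structures.
From mathcomp Require Import all_boot all_order all_algebra all_fingroup.
From mathcomp Require Import mxabelem boolp ring zify.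
Set Implicit Arguments. Unset Strict Implicit. Unset Printing Implicit Defensive.
Import GRing.Theory.
Local Open Scope ring_scope.

(* Switching at every vertex v with multiplicity c_v adds the matrix (c_j - c_i), and
   isomorphism is the action of S_n relabelling rows and columns simultaneously.

   If n is invertible mod l, every alternating matrix switches to an Eulerian one (take
   c_i = (row sum i) / n), and a switching between two Eulerian matrices has constant c,
   hence is trivial; so both kinds of classes correspond.

   If l = p is prime, Y |-> Y - Y^T identifies alternating matrices with all matrices
   modulo the symmetric ones, so switching classes are the S_n-orbits on the cosets of the
   space K spanned by the symmetric matrices and the matrices with constant columns. For the
   trace form, the Eulerian alternating matrices are exactly the orthogonal complement of K.
   By Burnside's lemma it remains to see that a permutation fixes as many cosets of K as
   vectors of K^perp, which holds for any orthogonal matrix P: both counts are powers of p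
   whose exponents are determined by rank (P - 1) and the rank of its intersection with K,
   as P - 1 and its transpose have the same row space. *)

Lemma eq_class_sets (T : finType) (S : {set T}) (r : rel T) :
  (forall x, r x x) -> (forall x y, r x y -> r y x) ->
  (forall x y z, r x y -> r y z -> r x z) ->
  forall x y, y \in S -> ([set z in S | r x z] == [set z in S | r y z]) = r x y.
Proof.
move=> refl sym trans x y yS; apply/eqP/idP => [eqxy|rxy].
  have : y \in [set z in S | r y z] by rewrite inE yS refl.
  by rewrite -eqxy inE => /andP [_ ->].
apply/setP=> z; rewrite !inE; case: (z \in S) => //=.
by apply/idP/idP => [rxz|ryz]; [apply: trans (sym _ _ rxy) rxz | apply: trans rxy ryz].
Qed.

Lemma card_classes_subset (T : finType) (S E : {set T}) (r1 r2 : rel T) :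
  E \subset S -> (forall x, r1 x x) -> (forall x y, r1 x y -> r1 y x) ->
  (forall x y z, r1 x y -> r1 y z -> r1 x z) ->
  (forall x, x \in S -> exists2 y, y \in E & r1 x y) ->
  {in E &, forall x y, r1 x y = r2 x y} ->
  #|[set [set y in S | r1 x y] | x in S]| = #|[set [set y in E | r2 x y] | x in E]|.
Proof.
move=> sES refl1 sym1 trans1 meetE r12.
pose C1 x := [set y in S | r1 x y].
have eqC x y : y \in E -> r1 x y -> C1 x = C1 y.
  by move=> yE rxy; apply/eqP; rewrite eq_class_sets // (subsetP sES).
have -> : [set C1 x | x in S] = [set C1 x | x in E].
  apply/setP=> C; apply/imsetP/imsetP => [[x xS ->]|[x xE ->]].
    by have [y yE rxy] := meetE x xS; exists y => //; apply: eqC.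
  by exists x => //; apply: (subsetP sES).
have -> : [set [set y in E | r2 x y] | x in E] = [set C :&: E | C in [set C1 x | x in E]].
  rewrite -imset_comp; apply: eq_in_imset => x xE /=; apply/setP=> y; rewrite !inE.
  case yE: (y \in E); rewrite ?andbF ?andbT //=.
  by rewrite (subsetP sES) //= r12.
symmetry; apply: card_in_imset => _ _ /imsetP [x xE ->] /imsetP [y yE ->] eqCE.
have : y \in C1 y :&: E by rewrite !inE yE refl1 (subsetP sES).
by rewrite -eqCE !inE => /andP [/andP [_ rxy] _]; apply: eqC yE rxy.
Qed.

Lemma card_imset_same_kernel (T U V : finType) (S : {set T}) (f : T -> U) (g : T -> V) :
  {in S &, forall x y, (f x == f y) = (g x == g y)} -> #|f @: S| = #|g @: S|.
Proof.
move=> fg.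
have card_fibres (W : finType) (h : T -> W) :
    #|h @: S| = #|[set [set y in S | h x == h y] | x in S]|.
  rewrite -(card_in_imset (f := fun z : W => [set y in S | z == h y]) (D := h @: S)).
    by rewrite -imset_comp.
  move=> _ _ /imsetP [x xS ->] /imsetP [x' x'S ->] e.
  have : x \in [set y in S | h x == h y] by rewrite inE xS eqxx.
  by rewrite e inE => /andP [_ /eqP].
rewrite (card_fibres _ f) (card_fibres _ g); congr #|pred_of_set _|.
apply: eq_in_imset => x xS; apply/setP=> y.
by rewrite !inE; case yS: (y \in S) => //=; apply: fg.
Qed.

Lemma subrACA (V : zmodType) (a b c d : V) : (a - b) - (c - d) = (a - c) - (b - d).
Proof. by rewrite !opprB addrACA [- b + _]addrC [in RHS]addrACA. Qed.

(* The strict upper and lower triangles cancel termwise; pairing the sum with its transpose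
   would only give [2 S = 0], which is useless in characteristic 2. *)
Lemma sum_skew (V : zmodType) n (f : 'I_n -> 'I_n -> V) :
  (forall i, f i i = 0) -> (forall i j, f i j + f j i = 0) -> \sum_i \sum_j f i j = 0.
Proof.
move=> f0 fskew.
have split_ij i j : f i j = (if (i < j)%N then f i j else 0) + (if (j < i)%N then f i j else 0).
  case: (ltngtP i j) => h; rewrite ?addr0 ?add0r //.
  by rewrite (val_inj h) f0.
under eq_bigr do under eq_bigr do rewrite split_ij.
under eq_bigr do rewrite big_split /=.
rewrite big_split /= [X in _ + X]exchange_big /= -big_split /= big1 // => i _.
rewrite -big_split big1 // => j _ /=.
by case: ifP => _; rewrite ?addr0 ?fskew.
Qed.

Section Switching.
Variables (R : finNzRingType) (n : nat).
Local Notation M := 'M[R]_n.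
Implicit Types (A B C : M) (s t : 'S_n) (c d : 'rV[R]_n).

(* The definitions of [Defs] over an arbitrary finite ring; for [R := 'Z_l] they unfold to the
   originals. *)
Definition AltR : {set M} :=
  [set A : M | [forall i, A i i == 0] && [forall i, forall j, A i j + A j i == 0]].
Definition XswR (v : 'I_n) : M :=
  \matrix_(i, j) (if (j == v) && (i != v) then 1
                  else if (i == v) && (j != v) then -1 else 0).
Definition muR (v : 'I_n) A : M := A + XswR v.
Definition switch_allR (e : 'I_n -> nat) A : M :=
  foldr (fun v B => iter (e v) (muR v) B) A (enum 'I_n).
Definition isoR A B : Prop := exists s : 'S_n, forall i j, B (s i) (s j) = A i j.
Definition switch_equivR A A' : Prop :=
  exists e : 'I_n -> nat, (forall v, (0 < e v)%N) /\ isoR A' (switch_allR e A).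
Definition eulerianR A : bool := [forall i, \sum_j A i j == 0].
Definition num_switch_classesR : nat :=
  #|[set [set B in AltR | `[< switch_equivR A B >]] | A in AltR]|.
Definition EulAltR : {set M} := [set A in AltR | eulerianR A].
Definition num_iso_eulerian_classesR : nat :=
  #|[set [set B in EulAltR | `[< isoR A B >]] | A in EulAltR]|.

Definition switch_mx c : M := \matrix_(i, j) (c 0 j - c 0 i).
Definition relabel A s : M := \matrix_(i, j) A (s^-1 i)%g (s^-1 j)%g.

Lemma XswRE v i j : XswR v i j = (v == j)%:R - (v == i)%:R.
Proof.
rewrite mxE [v == j]eq_sym [v == i]eq_sym.
by case: (eqVneq j v) => hj; case: (eqVneq i v) => hi; rewrite ?subrr ?subr0 ?sub0r.
Qed.

Lemma sum_mulr_delta (F : 'I_n -> R) j : \sum_v F v * (v == j)%:R = F j.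
Proof.
rewrite (bigD1 j) //= eqxx mulr1 big1 ?addr0 // => v /negbTE ->; by rewrite mulr0.
Qed.

Lemma switch_mx_sumXsw c : \sum_v c 0 v *: XswR v = switch_mx c.
Proof.
apply/matrixP=> i j; rewrite summxE !mxE.
under eq_bigr do rewrite mxE XswRE mulrBr.
by rewrite sumrB !sum_mulr_delta.
Qed.

Lemma iter_muR k v A : iter k (muR v) A = A + k%:R *: XswR v.
Proof.
elim: k => [|k IH] /=; first by rewrite scale0r addr0.
by rewrite IH /muR -addrA -[in RHS]addn1 natrD scalerDl scale1r.
Qed.

Lemma switch_allRE e A : switch_allR e A = A + switch_mx (\row_v (e v)%:R).
Proof.
rewrite -switch_mx_sumXsw /switch_allR.
have -> : \sum_v (\row_v (e v)%:R : 'rV[R]_n) 0 v *: XswR v =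
          \sum_(v <- enum 'I_n) (e v)%:R *: XswR v.
  by rewrite big_enum /=; apply: eq_bigr => v _; rewrite mxE.
elim: (enum 'I_n) => [|v r IH] /=; first by rewrite big_nil addr0.
by rewrite big_cons iter_muR IH -addrA [in X in A + X]addrC.
Qed.

Lemma isoRP A B : isoR A B <-> exists s, B = relabel A s.
Proof.
split=> [[s hs]|[s ->]]; exists s.
  by apply/matrixP=> i j; rewrite mxE -hs !permKV.
by move=> i j; rewrite mxE !permK.
Qed.

Lemma relabelP a A B s : relabel (a *: A + B) s = a *: relabel A s + relabel B s.
Proof. by apply/matrixP=> i j; rewrite !mxE. Qed.
Lemma relabelD A B s : relabel (A + B) s = relabel A s + relabel B s.
Proof. by apply/matrixP=> i j; rewrite !mxE. Qed.
Lemma relabelN A s : relabel (- A) s = - relabel A s.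
Proof. by apply/matrixP=> i j; rewrite !mxE. Qed.
Lemma relabelB A B s : relabel (A - B) s = relabel A s - relabel B s.
Proof. by rewrite relabelD relabelN. Qed.
Lemma relabel1 A : relabel A 1 = A.
Proof. by apply/matrixP=> i j; rewrite mxE invg1 !perm1. Qed.
Lemma relabelM A s t : relabel (relabel A s) t = relabel A (s * t).
Proof. by apply/matrixP=> i j; rewrite !mxE invMg !permM. Qed.
Lemma relabelK A s : relabel (relabel A s) s^-1 = A.
Proof. by rewrite relabelM mulgV relabel1. Qed.
Lemma relabel_tr A s : (relabel A s)^T = relabel A^T s.
Proof. by apply/matrixP=> i j; rewrite !mxE. Qed.
Lemma relabel_switch_mx c s : relabel (switch_mx c) s = switch_mx (\row_v c 0 (s^-1 v)%g).
Proof. by apply/matrixP=> i j; rewrite !mxE. Qed.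

Lemma switch_mxD c d : switch_mx c + switch_mx d = switch_mx (c + d).
Proof. by apply/matrixP=> i j; rewrite !mxE opprD addrACA. Qed.
Lemma switch_mxN c : - switch_mx c = switch_mx (- c).
Proof. by apply/matrixP=> i j; rewrite !mxE opprB opprK addrC. Qed.
Lemma switch_mx0 : switch_mx 0 = 0.
Proof. by apply/matrixP=> i j; rewrite !mxE subrr. Qed.

Lemma rowsum_relabel A s i : \sum_j relabel A s i j = \sum_j A (s^-1 i)%g j.
Proof.
under eq_bigr do rewrite mxE.
by rewrite (reindex_inj (@perm_inj _ s)); apply: eq_bigr => j _; rewrite permK.
Qed.

Lemma rowsum_switch_mx c i : \sum_j switch_mx c i j = \sum_j c 0 j - c 0 i *+ n.
Proof. by under eq_bigr do rewrite mxE; rewrite sumrB sumr_const card_ord. Qed.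

Lemma AltRP A :
  reflect ((forall i, A i i = 0) /\ (forall i j, A i j + A j i = 0)) (A \in AltR).
Proof.
rewrite inE; apply: (iffP andP) => [[/forallP h1 /forallP h2]|[h1 h2]]; split.
- by move=> i; apply/eqP.
- by move=> i j; apply/eqP; have /forallP := h2 i.
- by apply/forallP=> i; rewrite h1.
- by apply/forallP=> i; apply/forallP=> j; rewrite h2.
Qed.

Lemma AltR_sum A : A \in AltR -> \sum_i \sum_j A i j = 0.
Proof. by move=> /AltRP [h1 h2]; apply: sum_skew. Qed.

Lemma AltR_relabel A s : A \in AltR -> relabel A s \in AltR.
Proof. by move=> /AltRP [h1 h2]; apply/AltRP; split=> *; rewrite !mxE. Qed.

Lemma AltRD A B : A \in AltR -> B \in AltR -> A + B \in AltR.
Proof.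
move=> /AltRP [h1 h2] /AltRP [h3 h4]; apply/AltRP; split=> *; rewrite !mxE.
  by rewrite h1 h3 addr0.
by rewrite addrACA h2 h4 addr0.
Qed.

Lemma AltR_switch_mx c : switch_mx c \in AltR.
Proof. by apply/AltRP; split=> *; rewrite !mxE ?subrr // addrC subrKA subrr. Qed.

Lemma AltR_skew_part A : A - A^T \in AltR.
Proof. by apply/AltRP; split=> [i|i j]; rewrite !mxE ?subrr // -opprB addNr. Qed.

Lemma eulerianRP A : reflect (forall i, \sum_j A i j = 0) (eulerianR A).
Proof. by apply: (iffP forallP) => h i; [apply/eqP|rewrite h]. Qed.

Lemma EulAltR_relabel A s : A \in EulAltR -> relabel A s \in EulAltR.
Proof.
move=> /setIdP [AltA /eulerianRP eulA]; rewrite inE AltR_relabel //=.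
by apply/eulerianRP=> i; rewrite rowsum_relabel eulA.
Qed.

Section NatSurjective.
Hypothesis natr_onto : forall x : R, exists2 k : nat, (0 < k)%N & k%:R = x.

Lemma switch_equivRP A B :
  switch_equivR A B <-> exists c s, A + switch_mx c = relabel B s.
Proof.
split=> [[e [_ /isoRP [s hs]]]|[c [s hs]]].
  by exists (\row_v (e v)%:R), s; rewrite -switch_allRE.
have [e e_gt0 eE] := fin_all_exists2 (fun v => natr_onto (c 0 v)).
exists e; split=> //; apply/isoRP; exists s.
by rewrite switch_allRE -hs; congr (_ + switch_mx _); apply/rowP=> v; rewrite mxE eE.
Qed.

Lemma switch_equivR_refl A : switch_equivR A A.
Proof. by apply/switch_equivRP; exists 0, 1%g; rewrite switch_mx0 addr0 relabel1. Qed.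

Lemma switch_equivR_sym A B : switch_equivR A B -> switch_equivR B A.
Proof.
move=> /switch_equivRP [c [s hs]]; apply/switch_equivRP.
have -> : B = relabel A s^-1 + relabel (switch_mx c) s^-1 by rewrite -relabelD hs relabelK.
exists (- \row_v c 0 (s^-1^-1 v)%g), s^-1%g.
by rewrite relabel_switch_mx -addrA switch_mxD subrr switch_mx0 addr0.
Qed.

Lemma switch_equivR_trans A B C :
  switch_equivR A B -> switch_equivR B C -> switch_equivR A C.
Proof.
move=> /switch_equivRP [c [s hs]] /switch_equivRP [d [t ht]]; apply/switch_equivRP.
have hB : B = relabel C t - switch_mx d by rewrite -ht addrK.
exists (c + \row_v d 0 (s^-1 v)%g), (t * s)%g.
by rewrite -switch_mxD addrA hs hB relabelB relabel_switch_mx relabelM subrK.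
Qed.

End NatSurjective.
End Switching.

Section InvertibleOrder.
Variables (R : finUnitRingType) (n : nat).
Local Notation M := 'M[R]_n.
Implicit Types c : 'rV[R]_n.
Hypothesis natr_onto : forall x : R, exists2 k : nat, (0 < k)%N & k%:R = x.
Hypothesis n_unit : (n%:R : R) \is a GRing.unit.

Lemma rowsum_add_switch_mx (A : M) c i :
  \sum_j (A + switch_mx c) i j = \sum_j A i j + \sum_j switch_mx c i j.
Proof. by rewrite -big_split; apply: eq_bigr => j _; rewrite mxE. Qed.

(* Switch at [i] by (row sum [i]) / [n]; these amounts sum to 0 as [A] is alternating. *)
Lemma switch_equivR_eulerian (A : M) :
  A \in AltR R n -> exists2 B, B \in EulAltR R n & switch_equivR A B.
Proof.
move=> AltA; pose c := \row_i ((\sum_j A i j) / n%:R).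
exists (A + switch_mx c).
  rewrite inE AltRD ?AltR_switch_mx //=; apply/eulerianRP=> i.
  rewrite rowsum_add_switch_mx rowsum_switch_mx.
  have -> : \sum_j c 0 j = 0.
    by under eq_bigr do rewrite mxE; rewrite -mulr_suml AltR_sum // mul0r.
  by rewrite sub0r mxE -[_ *+ n]mulr_natr divrK // subrr.
by apply/(switch_equivRP natr_onto); exists c, 1%g; rewrite relabel1.
Qed.

Lemma switch_mx_eq0 c : (forall i, \sum_j switch_mx c i j = 0) -> switch_mx c = 0.
Proof.
move=> rowsum0; apply/matrixP=> i j; rewrite !mxE; apply/eqP; rewrite subr_eq0; apply/eqP.
have rowsum_c k : c 0 k *+ n = \sum_j c 0 j.
  by apply/eqP; rewrite eq_sym -subr_eq0 -rowsum_switch_mx rowsum0.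
by apply: (mulIr n_unit); rewrite !mulr_natr !rowsum_c.
Qed.

Lemma eulerian_switch_equivR_iso (A B : M) :
  A \in EulAltR R n -> B \in EulAltR R n -> switch_equivR A B -> isoR A B.
Proof.
move=> /setIdP [_ /eulerianRP eulA] EulB /(switch_equivRP natr_onto) [c [s hs]].
have /setIdP [_ /eulerianRP eulBs] := EulAltR_relabel s EulB.
have c0 : switch_mx c = 0.
  apply: switch_mx_eq0 => i; have := eulBs i.
  by rewrite -hs rowsum_add_switch_mx eulA add0r.
by rewrite c0 addr0 in hs; apply/isoRP; exists s^-1%g; rewrite hs relabelK.
Qed.

Theorem num_classes_invertible_order :
  num_switch_classesR R n = num_iso_eulerian_classesR R n.
Proof.
apply: card_classes_subset.
- by apply/subsetP=> A /setIdP [].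
- by move=> A; apply/asboolP; apply: switch_equivR_refl.
- by move=> A B /asboolP AB; apply/asboolP; apply: switch_equivR_sym AB.
- by move=> A B C /asboolP AB /asboolP BC; apply/asboolP; apply: switch_equivR_trans AB BC.
- by move=> A /switch_equivR_eulerian [B EulB AB]; exists B => //; apply/asboolP.
move=> A B EulA EulB; apply/asboolP/asboolP => [|/isoRP [s ->]].
  exact: eulerian_switch_equivR_iso.
by apply/(switch_equivRP natr_onto); exists 0, s^-1%g; rewrite switch_mx0 addr0 relabelK.
Qed.

End InvertibleOrder.

Section FixedCosets.
Variables (F : finFieldType) (N : nat).
Implicit Types (T P : 'M[F]_N) (u v : 'rV[F]_N).

Lemma mxrank_ker_mul_coker T m (K : 'M[F]_(m, N)) : (T^T == T)%MS ->
  \rank (kermx (T *m cokermx K)) = (\rank K + \rank (kermx (row_mx T K^T)))%N.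
Proof.
move=> /eqmxP TtT.
have kerK : (kermx (cokermx K) :=: K)%MS.
  by apply/eqmxP/andP; rewrite submxE mulmx_ker sub_kermx mulmx_coker.
have rank_mul := mxrank_mul_ker T (cokermx K).
rewrite (cap_eqmx (eqmx_refl T) kerK) in rank_mul.
have rank_sum := mxrank_sum_cap T K.
have rank_row : \rank (row_mx T K^T) = \rank (T + K)%MS.
  by rewrite -mxrank_tr tr_row_mx trmxK -addsmxE (adds_eqmx TtT (eqmx_refl K)).
rewrite !mxrank_ker rank_row; move: rank_mul rank_sum.
(* Naming the ranks hides their differing structure instances from [lia]. *)
set a := \rank (T *m _); set b := \rank (T :&: K); set c := \rank (T + K)%MS.
move: (rank_leq_col T) (rank_leq_col (T + K)%MS); rewrite -/c; lia.
Qed.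

(* The left-hand side counts the union of the cosets of [K] fixed by [P]. *)
Lemma card_fixed_mod_orthogonal P m (K : 'M[F]_(m, N)) :
  P *m P^T = 1%:M -> P^T *m P = 1%:M ->
  #|[set v : 'rV_N | (v *m (P - 1%:M) <= K)%MS]| =
  (#|rowg K| * #|[set v : 'rV_N | (v *m P == v) && (v *m K^T == 0%R)]|)%N.
Proof.
move=> PPt PtP; set T := P - 1%:M.
have TtT : (T^T == T)%MS.
  have Tt : T^T = - (P^T *m T) by rewrite /T linearB /= trmx1 mulmxBr PtP mulmx1 opprB.
  have TE : T = - (P *m T^T) by rewrite /T linearB /= trmx1 mulmxBr PPt mulmx1 opprB.
  by apply/andP; split; [rewrite Tt | rewrite {1}TE]; rewrite eqmx_opp submxMl.
have -> : [set v : 'rV_N | (v *m T <= K)%MS] = rowg (kermx (T *m cokermx K)).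
  by apply/setP=> v; rewrite !inE sub_kermx mulmxA -submxE.
have -> : [set v : 'rV_N | (v *m P == v) && (v *m K^T == 0)] = rowg (kermx (row_mx T K^T)).
  apply/setP=> v; rewrite !inE sub_kermx mul_mx_row row_mx_eq0.
  by rewrite /T mulmxBr mulmx1 subr_eq0.
by rewrite !card_rowg -expnD mxrank_ker_mul_coker.
Qed.

Lemma orthogonal_submxP m (K : 'M[F]_(m, N)) v :
  reflect (forall u, (u <= K)%MS -> (v *m u^T) 0 0 = 0) (v *m K^T == 0).
Proof.
apply: (iffP eqP) => [vK u /submxP [w ->]|vK].
  by rewrite trmx_mul mulmxA vK mul0mx mxE.
apply/rowP=> i; have := vK (row i K) (row_sub i K).
by rewrite rowE trmx_mul trmx_delta mulmxA -colE mxE => ->; rewrite mxE.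
Qed.

End FixedCosets.

Lemma mul_rV_lin1_fun (R : comNzRingType) m p (f : 'rV[R]_m -> 'rV[R]_p) :
  (forall a u v, f (a *: u + v) = a *: f u + f v) -> forall u, u *m lin1_mx f = f u.
Proof.
move=> f_lin u.
pose g : {linear 'rV[R]_m -> 'rV[R]_p} := HB.pack f (GRing.isLinear.Build _ _ _ _ f f_lin).
exact: (mul_rV_lin1 g).
Qed.

Section SwitchSpace.
Variables (F : finFieldType) (n : nat).
Local Notation M := 'M[F]_n.
Local Notation N := (n * n)%N.
Implicit Types (A B Y : M) (s t : 'S_n) (c : 'rV[F]_n) (u v : 'rV[F]_N).

Definition relabel_mx s : 'M[F]_N := lin1_mx (fun v => mxvec (relabel (vec_mx v) s)).

Lemma mul_relabel_mx s v : v *m relabel_mx s = mxvec (relabel (vec_mx v) s).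
Proof.
by apply: mul_rV_lin1_fun => a u w; rewrite linearP /= relabelP linearP.
Qed.

Lemma relabel_mxM s t : relabel_mx s *m relabel_mx t = relabel_mx (s * t).
Proof.
by apply/row_matrixP=> i; rewrite !rowE mulmxA !mul_relabel_mx mxvecK relabelM.
Qed.

Lemma relabel_mx1 : relabel_mx 1 = 1%:M.
Proof.
by apply/row_matrixP=> i; rewrite !rowE mul_relabel_mx mulmx1 relabel1 vec_mxK.
Qed.

Lemma tr_relabel_mx s : (relabel_mx s)^T = relabel_mx s^-1.
Proof.
apply/matrixP=> k k'; rewrite !mxE.
case/mxvec_indexP: k => i j; case/mxvec_indexP: k' => i' j'.
have inv_eq (a b : 'I_n) : (s^-1 a == b)%g = (s b == a).
  by rewrite -(inj_eq (@perm_inj _ s)) permKV eq_sym.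
by rewrite !vec_mx_delta !mxvecE !mxE invgK !inv_eq.
Qed.

Lemma relabel_mx_orthogonal s : relabel_mx s *m (relabel_mx s)^T = 1%:M.
Proof. by rewrite tr_relabel_mx relabel_mxM mulgV relabel_mx1. Qed.

Lemma relabel_mx_orthogonal_tr s : (relabel_mx s)^T *m relabel_mx s = 1%:M.
Proof. by rewrite tr_relabel_mx relabel_mxM mulVg relabel_mx1. Qed.

Definition sym_space : 'M[F]_N := kermx (lin1_mx (fun v => mxvec (vec_mx v - (vec_mx v)^T))).

Lemma sub_sym_space v : (v <= sym_space)%MS = (vec_mx v == (vec_mx v)^T).
Proof.
rewrite sub_kermx mul_rV_lin1_fun ?mxvec_eq0 ?subr_eq0 // => a u w.
rewrite -linearP; congr mxvec; apply/matrixP=> i j; rewrite !mxE.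
by rewrite mulrBr opprD addrACA.
Qed.

Definition row_rep c : M := \matrix_(i, j) c 0 j.
Definition row_rep_space : 'M[F]_(n, N) := lin1_mx (fun c => mxvec (row_rep c)).

Lemma mul_row_rep_space c : c *m row_rep_space = mxvec (row_rep c).
Proof.
apply: mul_rV_lin1_fun => a u w; rewrite -linearP; congr mxvec.
by apply/matrixP=> i j; rewrite !mxE.
Qed.

Definition switch_space : 'M[F]_(N + n, N) := col_mx sym_space row_rep_space.

Lemma switch_spaceP Y :
  (Y \in switch_space)%MS <-> exists c, Y - Y^T = switch_mx c.
Proof.
rewrite -addsmxE; split=> [/sub_addsmxP [[u c] /= Yuc]|[c Yc]].
  have /eqP symY : (vec_mx (u *m sym_space) == (vec_mx (u *m sym_space))^T).
    by rewrite -sub_sym_space submxMl.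
  exists c; rewrite -[Y]mxvecK Yuc mul_row_rep_space linearD /= mxvecK linearD /=.
  rewrite -symY opprD addrACA subrr add0r.
  by apply/matrixP=> i j; rewrite !mxE.
have : (mxvec (Y - row_rep c) <= sym_space)%MS.
  rewrite sub_sym_space mxvecK; apply/eqP/matrixP=> i j.
  move/matrixP: Yc => /(_ i j); rewrite !mxE => Yij.
  by rewrite -[Y i j](subrK (Y j i)) Yij; ring.
case/submxP=> u Yu; apply/sub_addsmxP; exists (u, c) => /=.
by rewrite -Yu mul_row_rep_space -linearD subrK.
Qed.

Lemma mxvec_dot A B : (mxvec A *m (mxvec B)^T) 0 0 = \sum_i \sum_j A i j * B i j.
Proof.
rewrite mxE (reindex (uncurry (@mxvec_index n n))) /=; last first.
  apply: onW_bij; have [g h1 h2] := curry_mxvec_bij n n.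
  by exists g => x; [apply: h1 | apply: h2].
by rewrite pair_big /=; apply: eq_bigr => -[i j] _ /=; rewrite mxE !mxvecE.
Qed.

Lemma dot_delta_mx B i j : \sum_a \sum_b B a b * delta_mx i j a b = B i j.
Proof.
rewrite (bigD1 i) //= [X in _ + X]big1 => [|a /negbTE ia]; last first.
  by rewrite big1 // => b _; rewrite mxE ia mulr0.
rewrite addr0 (bigD1 j) //= [X in _ + X]big1 => [|b /negbTE jb]; last first.
  by rewrite mxE jb andbF mulr0.
by rewrite addr0 mxE !eqxx mulr1.
Qed.

Lemma orthogonal_sym_space B : (mxvec B *m sym_space^T == 0) = (B \in AltR F n).
Proof.
apply/orthogonal_submxP/AltRP => [Bperp|[B0 Bskew] u].
  have dotB i j : (mxvec B *m (mxvec (delta_mx i j))^T) 0 0 = B i j.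
    by rewrite mxvec_dot dot_delta_mx.
  split=> [i|i j]; first by rewrite -dotB Bperp // sub_sym_space mxvecK trmx_delta.
  have := Bperp (mxvec (delta_mx i j + delta_mx j i)).
  rewrite sub_sym_space mxvecK linearD /= !trmx_delta addrC eqxx => /(_ isT).
  rewrite mxvec_dot => <-; symmetry.
  under eq_bigr do under eq_bigr do rewrite [X in _ * X]mxE mulrDr.
  by under eq_bigr do rewrite big_split /=; rewrite big_split /= !dot_delta_mx addrC.
rewrite sub_sym_space => /eqP symu; rewrite -(vec_mxK u) mxvec_dot.
apply: sum_skew => [i|i j]; first by rewrite B0 mul0r.
have -> : vec_mx u j i = vec_mx u i j by rewrite [in LHS]symu mxE.
by rewrite -mulrDl Bskew mul0r.
Qed.

Lemma orthogonal_row_rep_space B :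
  B \in AltR F n -> (mxvec B *m row_rep_space^T == 0) = eulerianR B.
Proof.
move=> /AltRP [_ Bskew].
have colsum j : \sum_i B i j = - \sum_i B j i.
  by rewrite -sumrN; apply: eq_bigr => i _; apply/eqP; rewrite -addr_eq0 addrC Bskew.
apply/orthogonal_submxP/eulerianRP => [Bperp j|Beul u /submxP [c ->]].
  have := Bperp (delta_mx 0 j *m row_rep_space) (submxMl _ _).
  rewrite mul_row_rep_space mxvec_dot => dot0.
  apply/eqP; rewrite -oppr_eq0 -colsum; apply/eqP; rewrite -[RHS]dot0.
  apply: eq_bigr => a _; rewrite (bigD1 j) //= big1 => [|b /negbTE jb]; last first.
    by rewrite !mxE jb andbF mulr0.
  by rewrite !mxE !eqxx mulr1 addr0.
rewrite mul_row_rep_space mxvec_dot exchange_big big1 // => j _.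
under eq_bigr do rewrite mxE.
by rewrite -mulr_suml colsum Beul oppr0 mul0r.
Qed.

Lemma orthogonal_switch_space B :
  (mxvec B *m switch_space^T == 0) = (B \in EulAltR F n).
Proof.
rewrite /switch_space tr_col_mx mul_mx_row row_mx_eq0 orthogonal_sym_space.
by apply/andP/setIdP=> -[AltB]; rewrite orthogonal_row_rep_space.
Qed.

End SwitchSpace.

Section PrimeField.
Variables (F : finFieldType) (n : nat).
Local Notation M := 'M[F]_n.
Local Notation N := (n * n)%N.
Local Notation K := (switch_space F n).
Implicit Types (A B X Y : M) (s : 'S_n).

Lemma switch_space_relabel Y s :
  (Y \in K)%MS -> (relabel Y s \in K)%MS.
Proof.
move=> /switch_spaceP [c Yc]; apply/switch_spaceP.
by exists (\row_v c 0 (s^-1 v)%g); rewrite relabel_tr -relabelB Yc relabel_switch_mx.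
Qed.

Definition switch_coset B : {set M} := [set X | (X - B \in K)%MS].

Lemma switch_coset_refl B : B \in switch_coset B.
Proof. by rewrite inE subrr linear0 sub0mx. Qed.

Lemma switch_coset_eqP B B' :
  reflect (switch_coset B = switch_coset B') (B - B' \in K)%MS.
Proof.
apply: (iffP idP) => [BB'|eqBB']; last by have := switch_coset_refl B; rewrite eqBB' inE.
have diffE X : mxvec (X - B') = mxvec (X - B) + mxvec (B - B').
  by rewrite -linearD addrA subrK.
apply/setP=> X; rewrite !inE diffE; apply/idP/idP => [XB|XB']; first exact: addmx_sub.
by rewrite -[mxvec (X - B)](addrK (mxvec (B - B'))) addmx_sub // eqmx_opp.
Qed.

Definition relabel_act := TotalAction (@relabel1 F n) (fun A s t => esym (relabelM A s t)).

Lemma switch_coset_relabel B s :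
  (relabel_act^*)%act (switch_coset B) s = switch_coset (relabel B s).
Proof.
apply/setP=> X; apply/imsetP/idP => [[Z BZ ->]|BsX].
  by rewrite inE /= -relabelB switch_space_relabel //; rewrite inE in BZ.
exists (relabel X s^-1); last by rewrite /= relabelM mulVg relabel1.
by move: BsX; rewrite !inE => /(switch_space_relabel s^-1); rewrite relabelB relabelK.
Qed.

Definition switch_cosets : {set {set M}} := [set switch_coset B | B : M].

Lemma acts_switch_cosets : [acts [set: 'S_n], on switch_cosets | relabel_act^*].
Proof.
apply/subsetP=> s _; rewrite !inE; apply/subsetP=> _ /imsetP [B _ ->].
by rewrite inE switch_coset_relabel imset_f.
Qed.

Lemma acts_EulAltR : [acts [set: 'S_n], on EulAltR F n | relabel_act].
Proof.
by apply/subsetP=> s _; rewrite !inE; apply/subsetP=> A EulA; rewrite inE EulAltR_relabel.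
Qed.

Lemma card_vec_mx (P : pred M) :
  #|[set B : M | P B]| = #|[set v : 'rV[F]_N | P (vec_mx v)]|.
Proof.
have -> : [set v : 'rV[F]_N | P (vec_mx v)] = mxvec @: [set B : M | P B].
  apply/setP=> v; rewrite inE; apply/idP/imsetP => [Pv|[B PB ->]].
    by exists (vec_mx v); rewrite ?inE // vec_mxK.
  by rewrite mxvecK; rewrite inE in PB.
by rewrite card_imset //; apply: (can_inj (@mxvecK F n n)).
Qed.

Lemma card_switch_coset B : #|switch_coset B| = #|rowg K|.
Proof.
rewrite card_vec_mx -(card_imset (rowg K) (addIr (mxvec B))); apply: eq_card => v.
rewrite !inE; have -> : mxvec (vec_mx v - B) = v - mxvec B by rewrite linearB /= vec_mxK.
apply/idP/imsetP => [vB|[w Kw ->]]; first by exists (v - mxvec B); rewrite ?subrK ?inE.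
by rewrite addrK; rewrite inE in Kw.
Qed.

Lemma switch_coset_fixed B s :
  (switch_coset B \in ('Fix_(switch_cosets | relabel_act^*)[s])%g) =
  (relabel B s - B \in K)%MS.
Proof.
rewrite inE imset_f //=; apply/afix1P/switch_coset_eqP; rewrite switch_coset_relabel.
  by move=> ->.
by move=> ->.
Qed.

Lemma partition_fixed_switch_cosets s :
  partition ('Fix_(switch_cosets | relabel_act^*)[s])%g
            [set B | (relabel B s - B \in K)%MS].
Proof.
apply/and3P; split.
- apply/eqP/setP=> X; rewrite inE -switch_coset_fixed.
  apply/bigcupP/idP => [[_ /setIP [/imsetP [B _ ->] Bfix] XB]|Xfix].
    have /switch_coset_eqP -> : (X - B \in K)%MS by rewrite inE in XB.
    by rewrite in_setI Bfix imset_f.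
  by exists (switch_coset X); rewrite ?switch_coset_refl // inE imset_f.
- apply: trivIsetS (subsetIl _ _) _; apply/trivIsetP=> _ _ /imsetP [B _ ->] /imsetP [B' _ ->].
  apply: contraNT; rewrite -setI_eq0 => /set0Pn [X /setIP [XB XB']]; apply/eqP.
  have /switch_coset_eqP <- : (X - B \in K)%MS by rewrite inE in XB.
  by have /switch_coset_eqP <- : (X - B' \in K)%MS by rewrite inE in XB'.
- apply/negP=> /setIP [/imsetP [B _ B0] _].
  by have := switch_coset_refl B; rewrite -B0 inE.
Qed.

Lemma card_fixed_switch_cosets s :
  (#|('Fix_(switch_cosets | relabel_act^*)[s])%g| * #|rowg K|)%N =
  #|[set v : 'rV[F]_N | (v *m (relabel_mx F s - 1%:M) <= K)%MS]|.
Proof.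
rewrite -(card_uniform_partition _ (partition_fixed_switch_cosets s)); last first.
  by move=> _ /setIP [/imsetP [B _ ->] _]; rewrite card_switch_coset.
rewrite card_vec_mx; apply: eq_card => v.
by rewrite !inE mulmxBr mulmx1 mul_relabel_mx linearB /= vec_mxK.
Qed.

Lemma card_afix_EulAltR s :
  #|('Fix_(EulAltR F n | relabel_act)[s])%g| =
  #|[set v : 'rV[F]_N | (v *m relabel_mx F s == v) && (v *m K^T == 0)]|.
Proof.
have -> : ('Fix_(EulAltR F n | relabel_act)[s])%g =
          [set B | (relabel B s == B) && (B \in EulAltR F n)].
  by apply/setP=> B; rewrite [in RHS]inE in_setI andbC; congr (_ && _); apply/afix1P/eqP.
rewrite (card_vec_mx (fun B => _ && _)); apply: eq_card => v.
rewrite [LHS]in_set [RHS]in_set -[v in v *m K^T]vec_mxK orthogonal_switch_space.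
by rewrite mul_relabel_mx -(inj_eq (can_inj (@vec_mxK F n n))) mxvecK.
Qed.

Lemma card_afix_switch_cosets s :
  #|('Fix_(switch_cosets | relabel_act^*)[s])%g| = #|('Fix_(EulAltR F n | relabel_act)[s])%g|.
Proof.
have K_gt0 : (0 < #|rowg K|)%N by apply/card_gt0P; exists 0; rewrite inE sub0mx.
apply/eqP; rewrite -(eqn_pmul2r K_gt0) card_fixed_switch_cosets card_afix_EulAltR mulnC.
by rewrite card_fixed_mod_orthogonal ?relabel_mx_orthogonal ?relabel_mx_orthogonal_tr.
Qed.

Lemma num_iso_eulerian_classesR_orbits :
  num_iso_eulerian_classesR F n = #|orbit relabel_act [set: 'S_n] @: EulAltR F n|.
Proof.
congr #|pred_of_set _|; apply: eq_in_imset => A EulA; apply/setP=> X; rewrite inE.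
apply/andP/imsetP => [[_ /asboolP /isoRP [s ->]]|[s _ ->]]; first by exists s.
by split; [apply: EulAltR_relabel | apply/asboolP/isoRP; exists s].
Qed.

Definition upper_part A : M := \matrix_(i, j) (if (i < j)%N then A i j else 0).

Lemma upper_part_skew A : A \in AltR F n -> upper_part A - (upper_part A)^T = A.
Proof.
move=> /AltRP [A0 Askew]; apply/matrixP=> i j; rewrite !mxE.
case: (ltngtP i j) => [_|_|/val_inj ->]; rewrite ?subr0 ?sub0r ?subrr ?A0 //.
by apply/eqP; rewrite eq_sym -addr_eq0 Askew.
Qed.

Lemma switch_cosets_orbits :
  orbit (relabel_act^*)%act [set: 'S_n] @: switch_cosets =
  [set orbit (relabel_act^*)%act [set: 'S_n] (switch_coset (upper_part A)) | A in AltR F n].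
Proof.
rewrite -imset_comp; apply/setP=> O; apply/imsetP/imsetP => [[B _ ->]|[A _ ->]].
  exists (B - B^T); first exact: AltR_skew_part.
  congr orbit; apply/switch_coset_eqP/switch_spaceP; exists 0; rewrite switch_mx0.
  by rewrite linearB /= subrACA (upper_part_skew (AltR_skew_part B)) subrr.
by exists (upper_part A).
Qed.

Hypothesis natr_onto : forall x : F, exists2 k : nat, (0 < k)%N & k%:R = x.

(* Two matrices lie in the same coset of [K] iff their antisymmetrisations differ by a
   switching matrix, and [upper_part] is a section of antisymmetrisation. *)
Lemma switch_equivR_orbits A A' : A \in AltR F n -> A' \in AltR F n ->
  switch_equivR A A' <->
  orbit (relabel_act^*)%act [set: 'S_n] (switch_coset (upper_part A)) =
  orbit (relabel_act^*)%act [set: 'S_n] (switch_coset (upper_part A')).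
Proof.
move=> AltA AltA'; split=> [/(switch_equivRP natr_onto) [c [s hs]]|/orbit_eqP /imsetP [s _]].
  apply/orbit_eqP/imsetP; exists s; rewrite ?inE //= switch_coset_relabel.
  apply/switch_coset_eqP/switch_spaceP; exists (- c).
  rewrite linearB /= subrACA (upper_part_skew AltA) relabel_tr -relabelB.
  by rewrite (upper_part_skew AltA') -hs -switch_mxN opprD addrA subrr add0r.
rewrite /= switch_coset_relabel => /switch_coset_eqP /switch_spaceP [c hc].
apply/(switch_equivRP natr_onto); exists (- c), s.
rewrite linearB /= subrACA (upper_part_skew AltA) relabel_tr -relabelB in hc.
by rewrite (upper_part_skew AltA') in hc; rewrite -switch_mxN -hc opprB addrC subrK.
Qed.

Lemma num_switch_classesR_orbits :
  num_switch_classesR F n = #|orbit (relabel_act^*)%act [set: 'S_n] @: switch_cosets|.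
Proof.
rewrite switch_cosets_orbits; apply: card_imset_same_kernel => A A' AltA AltA'.
rewrite (@eq_class_sets _ _ (fun B C => `[< switch_equivR B C >])) //.
- by apply/asboolP/eqP=> /(switch_equivR_orbits AltA AltA').
- by move=> B; apply/asboolP; apply: switch_equivR_refl.
- by move=> B C /asboolP BC; apply/asboolP; apply: switch_equivR_sym BC.
by move=> B C D /asboolP BC /asboolP CD; apply/asboolP; apply: switch_equivR_trans BC CD.
Qed.

Theorem num_classes_prime_field :
  num_switch_classesR F n = num_iso_eulerian_classesR F n.
Proof.
rewrite num_switch_classesR_orbits num_iso_eulerian_classesR_orbits.
apply/eqP; rewrite -(eqn_pmul2r (cardG_gt0 [set: 'S_n]%G)).
rewrite -(Frobenius_Cauchy acts_switch_cosets) -(Frobenius_Cauchy acts_EulAltR).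
by apply/eqP/eq_bigr=> s _; apply: card_afix_switch_cosets.
Qed.

End PrimeField.

Lemma Zp_natr_onto p : (1 < p)%N -> forall x : 'Z_p, exists2 k : nat, (0 < k)%N & k%:R = x.
Proof.
move=> p_gt1 x; exists (x + p)%N; first by rewrite addn_gt0 (ltnW p_gt1) orbT.
by rewrite natrD natr_Zp pchar_Zp // addr0.
Qed.

Theorem corollary4p8 (l n : nat) :
  (2 <= l)%N -> (1 <= n)%N -> (coprime l n || prime l) ->
  num_switch_classes l n = num_iso_eulerian_classes l n.
Proof.
move=> l_gt1 _ /orP [l_coprime | l_prime].
  apply: (num_classes_invertible_order (Zp_natr_onto l_gt1)).
  by rewrite unitZpE.
rewrite -(pdiv_id l_prime).
exact: (num_classes_prime_field n (Zp_natr_onto (prime_gt1 (pdiv_prime l_gt1)))).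
Qed.
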